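(* Let $s>0$ and let $(V_s,\oplus,\otimes)$ be the Möbius gyrovector space on the open disc $V_s=\{z\in\mathbb{C}:|z|<s\}$. Let $ABC$ be a gyrotriangle with vertices $A,B,C\in V_s$, and let $D$ be a point on the gyroside $BC$. Let $l$ be a gyroline passing through none of $A,B,C$, such that $l$ meets the gyroline $AB$ at $M$, the gyroline $AC$ at $N$, and the gyroline $AD$ at $P$. Then $$\frac{(BD)_\gamma}{(CD)_\gamma}\cdot\frac{(CA)_\gamma}{(NA)_\gamma}\cdot\frac{(NP)_\gamma}{(MP)_\gamma}\cdot\frac{(MA)_\gamma}{(BA)_\gamma}=1.$$
   Context: Möbius addition on $V_s$ is $a\oplus b=\dfrac{a+b}{1+\bar a b/s^2}$, with $\ominus a=-a$ and $a\ominus b=a\oplus(-b)$; for $s=1$ this is the Poincaré disc model of hyperbolic geometry. For points $P,Q\in V_s$, the gyrolength (hyperbolic gyrodistance) $PQ$ is $|\ominus P\oplus Q|$. Gyrolines are the geodesics of the Poincaré disc model, i.e. the sets $\{A\oplus(\ominus A\oplus B)\otimes t: t\in\mathbb{R}\}$ for distinct $A,B$ (the gyroline $AB$); equivalently, diameters of the disc and circular arcs in the disc orthogonal to its boundary. The gyroside $BC$ is the geodesic segment joining $B$ and $C$. For a gyrolength $v\in(-s,s)$, the notation $v_\gamma$ means $v_\gamma=\dfrac{v}{1-\frac{v^2}{s^2}}$. *)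

From Stdlib Require Import Reals.
From Coquelicot Require Import Coquelicot.
Open Scope R_scope.

Definition tanh_ (x : R) : R := (exp x - exp (- x)) / (exp x + exp (- x)).
Definition artanh_ (y : R) : R := ln ((1 + y) / (1 - y)) / 2.

Definition in_disc (s : R) (z : C) : Prop := Cmod z < s.

Definition madd (s : R) (a b : C) : C :=
  Cdiv (Cplus a b) (Cplus (RtoC 1) (Cdiv (Cmult (Cconj a) b) (RtoC (s ^ 2)))).

Definition mscal (s : R) (r : R) (v : C) : C :=
  if Req_EM_T (Cmod v) 0 then RtoC 0
  else Cmult (RtoC (s * tanh_ (r * artanh_ (Cmod v / s)) / Cmod v)) v.

Definition gdist (s : R) (P Q : C) : R := Cmod (madd s (Copp P) Q).

Definition gam (s v : R) : R := v / (1 - v ^ 2 / s ^ 2).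

Definition on_gyroline (s : R) (A B X : C) : Prop :=
  exists t : R, X = madd s A (mscal s t (madd s (Copp A) B)).

Definition in_gyroside (s : R) (A B X : C) : Prop :=
  exists t : R, 0 < t < 1 /\ X = madd s A (mscal s t (madd s (Copp A) B)).

From Stdlib Require Import Reals Lra Psatz.
From Coquelicot Require Import Coquelicot.
Open Scope R_scope.

(* Lift the disc to Minkowski space by z |-> (s^2 + |z|^2, 2 s z), a projective form of the
   hyperboloid model.  Gyrolines become planes through the origin, i.e. three points are on a
   gyroline exactly when the determinant of their lifts vanishes, and (v_gamma of PQ)^2 equals
   s^2 G(P, Q) / (4 (s^2 - |P|^2)^2 (s^2 - |Q|^2)^2), where G(x, y) = <x,y>^2 - <x,x><y,y> is the
   Gram determinant of the lifts.  The factors s^2 - |X|^2 cancel in the product of the four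
   ratios, so the theorem becomes an identity between Gram determinants.  Since G(x, y) is a
   quadratic form in x × y, writing all vectors in the frame of the lifts of A, B, C reduces it to
   the fact that the incidences make the normals n × p and m × p proportional, with the ratio
   forced by P lying on AD. *)

(** * Linear algebra of Minkowski space *)

Definition V3 := (R * R * R)%type.

Definition lorentz (x y : V3) : R :=
  let '(x0, x1, x2) := x in let '(y0, y1, y2) := y in x0 * y0 - x1 * y1 - x2 * y2.

Definition gram (x y : V3) : R := lorentz x y ^ 2 - lorentz x x * lorentz y y.

Definition lorentz_adj (w : V3) : R := let '(w0, w1, w2) := w in w1 ^ 2 + w2 ^ 2 - w0 ^ 2.

Definition cross (x y : V3) : V3 :=
  let '(x0, x1, x2) := x in let '(y0, y1, y2) := y in
  (x1 * y2 - x2 * y1, x2 * y0 - x0 * y2, x0 * y1 - x1 * y0).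

Definition det3 (x y z : V3) : R :=
  let '(x0, x1, x2) := x in let '(y0, y1, y2) := y in let '(z0, z1, z2) := z in
  x0 * (y1 * z2 - y2 * z1) - x1 * (y0 * z2 - y2 * z0) + x2 * (y0 * z1 - y1 * z0).

Definition vscale (k : R) (x : V3) : V3 := let '(x0, x1, x2) := x in (k * x0, k * x1, k * x2).

Definition comb (x : V3) (a b c : V3) : V3 :=
  let '(x0, x1, x2) := x in
  let '(a0, a1, a2) := a in let '(b0, b1, b2) := b in let '(c0, c1, c2) := c in
  (x0 * a0 + x1 * b0 + x2 * c0, x0 * a1 + x1 * b1 + x2 * c1, x0 * a2 + x1 * b2 + x2 * c2).

(* [gram] of two vectors given by coordinates in the frame [a, b, c], as a function of the cross
   product [w] of the coordinate vectors (see [gram_coords]). *)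
Definition gram_in (a b c w : V3) : R := lorentz_adj (comb w (cross b c) (cross c a) (cross a b)).

Definition e1 : V3 := (1, 0, 0).
Definition e2 : V3 := (0, 1, 0).
Definition e3 : V3 := (0, 0, 1).

(* Only variables occurring in the goal are destructed: section variables survive [destruct], so
   destructing every [V3] in the context would loop. *)
Ltac destruct_V3 :=
  repeat match goal with v : V3 |- _ =>
    match goal with |- context [v] => destruct v as [[? ?] ?] end end.
Ltac unfold_V3 :=
  destruct_V3; cbv [gram lorentz lorentz_adj cross det3 vscale comb gram_in e1 e2 e3].
Ltac V3_ring := unfold_V3; apply (f_equal2 pair); [apply (f_equal2 pair)|]; ring.

Lemma gram_cross x y : gram x y = lorentz_adj (cross x y).
Proof. unfold_V3; ring. Qed.

Lemma gram_scale_l k x y : gram (vscale k x) y = k ^ 2 * gram x y.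
Proof. unfold_V3; ring. Qed.

Lemma gram_scale_r k x y : gram x (vscale k y) = k ^ 2 * gram x y.
Proof. unfold_V3; ring. Qed.

Lemma cross_comb x y a b c :
  cross (comb x a b c) (comb y a b c) = comb (cross x y) (cross b c) (cross c a) (cross a b).
Proof. V3_ring. Qed.

Lemma det3_comb x y z a b c :
  det3 (comb x a b c) (comb y a b c) (comb z a b c) = det3 x y z * det3 a b c.
Proof. unfold_V3; ring. Qed.

Lemma det3_scale k l m x y z : det3 (vscale k x) (vscale l y) (vscale m z) = k * l * m * det3 x y z.
Proof. unfold_V3; ring. Qed.

Lemma comb_cramer a b c x :
  vscale (det3 a b c) x = comb (det3 x b c, det3 a x c, det3 a b x) a b c.
Proof. V3_ring. Qed.

Lemma gram_in_scale a b c k w : gram_in a b c (vscale k w) = k ^ 2 * gram_in a b c w.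
Proof. unfold_V3; ring. Qed.

(* Cramer's rule, scaled so as to avoid dividing by [det3 a b c]. *)
Lemma coords_exist a b c x : exists x', vscale (det3 a b c) x = comb x' a b c.
Proof. eexists; apply comb_cramer. Qed.

Lemma gram_coords {a b c k l x y x' y'} :
  vscale k x = comb x' a b c -> vscale l y = comb y' a b c ->
  (k * l) ^ 2 * gram x y = gram_in a b c (cross x' y').
Proof.
  intros Hx Hy. unfold gram_in. rewrite <- cross_comb, <- Hx, <- Hy, <- gram_cross.
  rewrite gram_scale_l, gram_scale_r. ring.
Qed.

Lemma det3_coords {a b c k l m x y z x' y' z'} : det3 a b c <> 0 ->
  vscale k x = comb x' a b c -> vscale l y = comb y' a b c -> vscale m z = comb z' a b c ->
  det3 x y z = 0 -> det3 x' y' z' = 0.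
Proof.
  intros HD Hx Hy Hz H0.
  assert (E : det3 x' y' z' * det3 a b c = k * l * m * det3 x y z)
    by (rewrite <- det3_comb, <- Hx, <- Hy, <- Hz; apply det3_scale).
  rewrite H0, Rmult_0_r in E. apply Rmult_integral in E as [E|E]; [exact E|contradiction].
Qed.

Section Menelaus.

Variables a b c : V3.
Notation Gw x y := (gram_in a b c (cross x y)).

Lemma gram_menelaus_std d m n p :
  det3 e2 e3 d = 0 -> det3 e1 e2 m = 0 -> det3 e1 e3 n = 0 -> det3 e1 d p = 0 -> det3 m n p = 0 ->
  Gw e2 d * Gw e3 e1 * Gw n p * Gw m e1 = Gw e3 d * Gw n e1 * Gw m p * Gw e2 e1.
Proof.
  destruct d as [[d0 d1] d2], m as [[m0 m1] m2], n as [[n0 n1] n2], p as [[p0 p1] p2].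
  cbv [det3 e1 e2 e3]. intros Hd Hm Hn Hdp Hmnp.
  replace d0 with 0 in * by lra. replace m2 with 0 in * by lra. replace n1 with 0 in * by lra.
  (* the two normals of the plane through m, n, p are proportional *)
  assert (Hnormal : vscale (d2 * m1) (cross (n0, 0, n2) (p0, p1, p2))
                    = vscale (- (d1 * n2)) (cross (m0, m1, 0) (p0, p1, p2))).
  { assert (H1 : d1 * p2 - d2 * p1 = 0) by lra.
    assert (H2 : m1 * (n2 * p0 - n0 * p2) - m0 * n2 * p1 = 0) by lra.
    cbv [vscale cross]. apply (f_equal2 pair); [apply (f_equal2 pair)|]; apply Rminus_diag_uniq.
    - transitivity (m1 * n2 * (d1 * p2 - d2 * p1)); [ring|rewrite H1; ring].
    - transitivity (d2 * (m1 * (n2 * p0 - n0 * p2) - m0 * n2 * p1) - m0 * n2 * (d1 * p2 - d2 * p1));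
        [ring|rewrite H1, H2; ring].
    - transitivity (- d1 * (m1 * (n2 * p0 - n0 * p2) - m0 * n2 * p1) - m1 * n0 * (d1 * p2 - d2 * p1));
        [ring|rewrite H1, H2; ring]. }
  assert (Hnp : (d2 * m1) ^ 2 * Gw (n0, 0, n2) (p0, p1, p2)
                = (d1 * n2) ^ 2 * Gw (m0, m1, 0) (p0, p1, p2)).
  { rewrite <- gram_in_scale, Hnormal, gram_in_scale. ring. }
  replace (cross (0, 1, 0) (0, d1, d2)) with (vscale d2 e1) by V3_ring.
  replace (cross (0, 0, 1) (0, d1, d2)) with (vscale (- d1) e1) by V3_ring.
  replace (cross (n0, 0, n2) (1, 0, 0)) with (vscale n2 (cross e3 e1)) by V3_ring.
  replace (cross (m0, m1, 0) (1, 0, 0)) with (vscale m1 (cross e2 e1)) by V3_ring.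
  rewrite !gram_in_scale. cbv [e1 e2 e3].
  transitivity ((d2 * m1) ^ 2 * Gw (n0, 0, n2) (p0, p1, p2) * gram_in a b c (1, 0, 0)
                * Gw (0, 0, 1) (1, 0, 0) * Gw (0, 1, 0) (1, 0, 0)); [ring|].
  rewrite Hnp. ring.
Qed.

Lemma gram_collapse_std d m :
  det3 e2 e3 d = 0 -> det3 e1 e2 m = 0 -> det3 e1 d m = 0 -> Gw e2 d * Gw m e1 = 0.
Proof.
  destruct d as [[d0 d1] d2], m as [[m0 m1] m2].
  cbv [det3 e1 e2 e3]. intros Hd Hm Hdm.
  replace d0 with 0 in * by lra. replace m2 with 0 in * by lra.
  replace (cross (0, 1, 0) (0, d1, d2)) with (vscale d2 e1) by V3_ring.
  replace (cross (m0, m1, 0) (1, 0, 0)) with (vscale m1 (cross e2 e1)) by V3_ring.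
  rewrite !gram_in_scale.
  replace (d2 ^ 2 * gram_in a b c e1 * (m1 ^ 2 * gram_in a b c (cross e2 e1)))
    with ((d2 * m1) ^ 2 * (gram_in a b c e1 * gram_in a b c (cross e2 e1))) by ring.
  replace (d2 * m1) with 0 by lra. ring.
Qed.

End Menelaus.

Lemma basis_coords a b c :
  vscale 1 a = comb e1 a b c /\ vscale 1 b = comb e2 a b c /\ vscale 1 c = comb e3 a b c.
Proof. repeat split; V3_ring. Qed.

Lemma gram_menelaus a b c d m n p :
  det3 a b c <> 0 -> det3 b c d = 0 -> det3 a b m = 0 -> det3 a c n = 0 -> det3 a d p = 0 ->
  det3 m n p = 0 ->
  gram b d * gram c a * gram n p * gram m a = gram c d * gram n a * gram m p * gram b a.
Proof.
  intros HD Hd Hm Hn Hp Hmnp.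
  destruct (basis_coords a b c) as (Ea & Eb & Ec).
  destruct (coords_exist a b c d) as [d' Ed], (coords_exist a b c m) as [m' Em],
    (coords_exist a b c n) as [n' En], (coords_exist a b c p) as [p' Ep].
  set (D := det3 a b c) in *.
  apply (Rmult_eq_reg_l (D ^ 8)); [|now apply pow_nonzero].
  transitivity ((1 * D) ^ 2 * gram b d * ((1 * 1) ^ 2 * gram c a)
                * ((D * D) ^ 2 * gram n p) * ((D * 1) ^ 2 * gram m a)); [ring|].
  rewrite (gram_coords Eb Ed), (gram_coords Ec Ea),
    (gram_coords En Ep), (gram_coords Em Ea).
  rewrite (gram_menelaus_std a b c d' m' n' p').
  - rewrite <- (gram_coords Ec Ed), <- (gram_coords En Ea),
      <- (gram_coords Em Ep), <- (gram_coords Eb Ea).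
    ring.
  - exact (det3_coords HD Eb Ec Ed Hd).
  - exact (det3_coords HD Ea Eb Em Hm).
  - exact (det3_coords HD Ea Ec En Hn).
  - exact (det3_coords HD Ea Ed Ep Hp).
  - exact (det3_coords HD Em En Ep Hmnp).
Qed.

Lemma gram_collapse a b c d m :
  det3 a b c <> 0 -> det3 b c d = 0 -> det3 a b m = 0 -> det3 a d m = 0 ->
  gram b d * gram m a = 0.
Proof.
  intros HD Hd Hm Hdm.
  destruct (basis_coords a b c) as (Ea & Eb & Ec).
  destruct (coords_exist a b c d) as [d' Ed], (coords_exist a b c m) as [m' Em].
  set (D := det3 a b c) in *.
  apply (Rmult_eq_reg_l (D ^ 4)); [|now apply pow_nonzero].
  transitivity ((1 * D) ^ 2 * gram b d * ((D * 1) ^ 2 * gram m a)); [ring|].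
  rewrite (gram_coords Eb Ed), (gram_coords Em Ea).
  rewrite (gram_collapse_std a b c d' m'); [ring| | |].
  - exact (det3_coords HD Eb Ec Ed Hd).
  - exact (det3_coords HD Ea Eb Em Hm).
  - exact (det3_coords HD Ea Ed Em Hdm).
Qed.

Lemma det3_cross_expand e f m n p :
  vscale (det3 m n p) (cross e f)
  = comb (det3 e f m, det3 e f n, det3 e f p) (cross n p) (cross p m) (cross m n).
Proof. V3_ring. Qed.

Lemma det3_coplanar e f m n p :
  gram e f <> 0 -> det3 e f m = 0 -> det3 e f n = 0 -> det3 e f p = 0 -> det3 m n p = 0.
Proof.
  intros Hef Hm Hn Hp.
  pose proof (det3_cross_expand e f m n p) as E. rewrite Hm, Hn, Hp in E.
  destruct (Req_dec (det3 m n p) 0) as [|HD]; [assumption|]. exfalso. apply Hef.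
  rewrite gram_cross. destruct (cross e f) as [[w0 w1] w2].
  destruct (cross n p) as [[? ?] ?], (cross p m) as [[? ?] ?], (cross m n) as [[? ?] ?].
  cbv [vscale comb] in E. injection E as E0 E1 E2.
  assert (w0 = 0) by (apply (Rmult_eq_reg_l (det3 m n p)); lra).
  assert (w1 = 0) by (apply (Rmult_eq_reg_l (det3 m n p)); lra).
  assert (w2 = 0) by (apply (Rmult_eq_reg_l (det3 m n p)); lra).
  subst. cbv [lorentz_adj]. ring.
Qed.

(** * Möbius operations in coordinates *)

(* [|s^2 + conj a * b|^2], i.e. [s^4] times the squared modulus of the denominator of [a (+) b]. *)
Definition madd_den (s a1 a2 b1 b2 : R) : R :=
  (s ^ 2 + a1 * b1 + a2 * b2) ^ 2 + (a1 * b2 - a2 * b1) ^ 2.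

Lemma madd_coord s a1 a2 b1 b2 : 0 < s -> madd_den s a1 a2 b1 b2 <> 0 ->
  madd s (a1, a2) (b1, b2) =
  (s ^ 2 * ((a1 + b1) * (s ^ 2 + a1 * b1 + a2 * b2) + (a2 + b2) * (a1 * b2 - a2 * b1))
     / madd_den s a1 a2 b1 b2,
   s ^ 2 * ((a2 + b2) * (s ^ 2 + a1 * b1 + a2 * b2) - (a1 + b1) * (a1 * b2 - a2 * b1))
     / madd_den s a1 a2 b1 b2).
Proof.
  intros Hs Hd. unfold madd_den in *.
  assert (Hs0 : s <> 0) by lra. assert (Hs2 : s ^ 2 <> 0) by (apply pow_nonzero; lra).
  assert (Hq : Cdiv (Cmult (Cconj (a1, a2)) (b1, b2)) (RtoC (s ^ 2))
               = ((a1 * b1 + a2 * b2) / s ^ 2, (a1 * b2 - a2 * b1) / s ^ 2)).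
  { unfold Cdiv, Cinv, Cmult, Cconj, RtoC; cbn [fst snd]. f_equal; field; auto. }
  unfold madd. rewrite Hq. unfold Cdiv, Cinv, Cmult, Cplus, RtoC; cbn [fst snd].
  assert ((1 + (a1 * b1 + a2 * b2) / s ^ 2 + 0) ^ 2 + (0 + (a1 * b2 - a2 * b1) / s ^ 2) ^ 2 <> 0).
  { replace ((1 + (a1 * b1 + a2 * b2) / s ^ 2 + 0) ^ 2 + (0 + (a1 * b2 - a2 * b1) / s ^ 2) ^ 2)
      with (((s ^ 2 + a1 * b1 + a2 * b2) ^ 2 + (a1 * b2 - a2 * b1) ^ 2) / (s ^ 2) ^ 2)
      by (field; auto).
    apply Rmult_integral_contrapositive_currified; auto.
    apply Rinv_neq_0_compat, pow_nonzero; auto. }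
  f_equal; field; auto.
Qed.

Lemma madd_den_pos s a1 a2 b1 b2 : 0 < s ->
  a1 ^ 2 + a2 ^ 2 < s ^ 2 -> b1 ^ 2 + b2 ^ 2 < s ^ 2 -> 0 < madd_den s a1 a2 b1 b2.
Proof.
  intros Hs Ha Hb. unfold madd_den.
  assert (Hs2 : 0 < s ^ 2) by (apply pow_lt; lra).
  assert (Hdot : (a1 * b1 + a2 * b2) ^ 2 < s ^ 2 * s ^ 2).
  { assert (E : (a1 * b1 + a2 * b2) ^ 2 + (a1 * b2 - a2 * b1) ^ 2
                = (a1 ^ 2 + a2 ^ 2) * (b1 ^ 2 + b2 ^ 2)) by ring.
    assert ((a1 ^ 2 + a2 ^ 2) * (b1 ^ 2 + b2 ^ 2) < s ^ 2 * s ^ 2)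
      by (apply Rmult_le_0_lt_compat; nra).
    pose proof (pow2_ge_0 (a1 * b2 - a2 * b1)). lra. }
  assert (0 < s ^ 2 + a1 * b1 + a2 * b2) by nra.
  pose proof (pow2_ge_0 (a1 * b2 - a2 * b1)). nra.
Qed.

Lemma madd_norm2 s a1 a2 b1 b2 : 0 < s -> madd_den s a1 a2 b1 b2 <> 0 ->
  fst (madd s (a1, a2) (b1, b2)) ^ 2 + snd (madd s (a1, a2) (b1, b2)) ^ 2
  = (s ^ 2) ^ 2 * ((a1 + b1) ^ 2 + (a2 + b2) ^ 2) / madd_den s a1 a2 b1 b2.
Proof. intros Hs H. rewrite madd_coord by auto. cbn [fst snd]. unfold madd_den in *. field. auto. Qed.

Lemma madd_in_disc s a1 a2 b1 b2 : 0 < s ->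
  a1 ^ 2 + a2 ^ 2 < s ^ 2 -> b1 ^ 2 + b2 ^ 2 < s ^ 2 ->
  fst (madd s (a1, a2) (b1, b2)) ^ 2 + snd (madd s (a1, a2) (b1, b2)) ^ 2 < s ^ 2.
Proof.
  intros Hs Ha Hb. pose proof (madd_den_pos s a1 a2 b1 b2 Hs Ha Hb) as Hd.
  rewrite madd_norm2 by lra.
  apply Rmult_lt_reg_r with (madd_den s a1 a2 b1 b2); [assumption|].
  unfold Rdiv. rewrite Rmult_assoc, Rinv_l, Rmult_1_r by lra.
  assert (E : madd_den s a1 a2 b1 b2 - s ^ 2 * ((a1 + b1) ^ 2 + (a2 + b2) ^ 2)
              = (s ^ 2 - (a1 ^ 2 + a2 ^ 2)) * (s ^ 2 - (b1 ^ 2 + b2 ^ 2))) by (unfold madd_den; ring).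
  assert (0 < (s ^ 2 - (a1 ^ 2 + a2 ^ 2)) * (s ^ 2 - (b1 ^ 2 + b2 ^ 2))) by (apply Rmult_lt_0_compat; lra).
  nra.
Qed.

Lemma madd_0_r s a1 a2 : 0 < s -> madd s (a1, a2) (0, 0) = (a1, a2).
Proof.
  intro Hs. assert (s <> 0) by lra.
  assert (Hd : madd_den s a1 a2 0 0 = (s ^ 2) ^ 2) by (unfold madd_den; ring).
  rewrite madd_coord, Hd; [f_equal; field; auto|auto|].
  rewrite Hd. apply pow_nonzero, pow_nonzero. assumption.
Qed.

Lemma madd_cancel_l s a1 a2 b1 b2 : 0 < s ->
  a1 ^ 2 + a2 ^ 2 < s ^ 2 -> b1 ^ 2 + b2 ^ 2 < s ^ 2 ->
  madd s (a1, a2) (madd s (- a1, - a2) (b1, b2)) = (b1, b2).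
Proof.
  intros Hs Ha Hb.
  assert (Ha' : (- a1) ^ 2 + (- a2) ^ 2 < s ^ 2) by lra.
  pose proof (madd_in_disc s (- a1) (- a2) b1 b2 Hs Ha' Hb) as HX.
  pose proof (madd_den_pos s (- a1) (- a2) b1 b2 Hs Ha' Hb) as D1.
  destruct (madd s (- a1, - a2) (b1, b2)) as [x1 x2] eqn:EX. cbn [fst snd] in HX.
  pose proof (madd_den_pos s a1 a2 x1 x2 Hs Ha HX) as D2.
  rewrite madd_coord in EX by lra. injection EX as E1 E2.
  assert (K : madd_den s a1 a2 x1 x2
              = (s ^ 2) ^ 2 * (s ^ 2 - a1 ^ 2 - a2 ^ 2) ^ 2 / madd_den s (- a1) (- a2) b1 b2).
  { rewrite <- E1, <- E2. unfold madd_den in *. field. lra. }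
  rewrite madd_coord, K by lra.
  assert (s ^ 2 - a1 ^ 2 - a2 ^ 2 <> 0) by lra. assert (s <> 0) by lra.
  subst x1 x2. unfold madd_den in *. f_equal; field; repeat split; auto; lra.
Qed.

Lemma madd_cancel_opp_l s b1 b2 z1 z2 : 0 < s ->
  b1 ^ 2 + b2 ^ 2 < s ^ 2 -> z1 ^ 2 + z2 ^ 2 < s ^ 2 ->
  madd s (- b1, - b2) (madd s (b1, b2) (z1, z2)) = (z1, z2).
Proof.
  intros Hs Hb Hz. rewrite <- (Ropp_involutive b1) at 2. rewrite <- (Ropp_involutive b2) at 2.
  apply madd_cancel_l; lra.
Qed.

Lemma tanh_expr x : tanh_ x = 1 - 2 / (exp (2 * x) + 1).
Proof.
  unfold tanh_. rewrite exp_Ropp. replace (2 * x) with (x + x) by ring. rewrite exp_plus.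
  pose proof (exp_pos x). field. split; nra.
Qed.

Lemma tanh_bound x : -1 < tanh_ x < 1.
Proof.
  rewrite tanh_expr. pose proof (exp_pos (2 * x)).
  assert (0 < 2 / (exp (2 * x) + 1) < 2); [|lra].
  split; [apply Rdiv_lt_0_compat; lra|].
  apply (Rmult_lt_reg_r (exp (2 * x) + 1)); [lra|]. field_simplify; lra.
Qed.

Lemma tanh_increasing x y : x < y -> tanh_ x < tanh_ y.
Proof.
  intro Hxy. rewrite !tanh_expr.
  pose proof (exp_pos (2 * x)). pose proof (exp_increasing (2 * x) (2 * y) ltac:(lra)).
  assert (2 / (exp (2 * y) + 1) < 2 / (exp (2 * x) + 1)); [|lra].
  unfold Rdiv. apply Rmult_lt_compat_l; [lra|]. apply Rinv_lt_contravar; nra.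
Qed.

Lemma tanh_0 : tanh_ 0 = 0.
Proof. rewrite tanh_expr, Rmult_0_r, exp_0. field. Qed.

Lemma tanh_artanh y : -1 < y < 1 -> tanh_ (artanh_ y) = y.
Proof.
  intro H. rewrite tanh_expr. unfold artanh_.
  replace (2 * (ln ((1 + y) / (1 - y)) / 2)) with (ln ((1 + y) / (1 - y))) by field.
  rewrite exp_ln by (apply Rdiv_lt_0_compat; lra). field. lra.
Qed.

Lemma artanh_pos y : 0 < y < 1 -> 0 < artanh_ y.
Proof.
  intro H. unfold artanh_. apply Rdiv_lt_0_compat; [|lra].
  rewrite <- ln_1. apply ln_increasing; [lra|].
  apply (Rmult_lt_reg_r (1 - y)); [lra|]. field_simplify; lra.
Qed.

Lemma Cmod_pair_sq v1 v2 : Cmod (v1, v2) ^ 2 = v1 ^ 2 + v2 ^ 2.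
Proof. unfold Cmod. cbn [fst snd]. apply pow2_sqrt. nra. Qed.

Lemma in_disc_pair s x1 x2 : 0 < s -> in_disc s (x1, x2) <-> x1 ^ 2 + x2 ^ 2 < s ^ 2.
Proof.
  intro Hs. unfold in_disc. rewrite <- Cmod_pair_sq. pose proof (Cmod_ge_0 (x1, x2)).
  split; intro H'; [nra|]. destruct (Rlt_or_le (Cmod (x1, x2)) s); [assumption|nra].
Qed.

Lemma mscal_pair s t v1 v2 k : Cmod (v1, v2) <> 0 ->
  k = s * tanh_ (t * artanh_ (Cmod (v1, v2) / s)) / Cmod (v1, v2) ->
  mscal s t (v1, v2) = (k * v1, k * v2).
Proof.
  intros Hv ->. unfold mscal. destruct (Req_EM_T (Cmod (v1, v2)) 0); [contradiction|].
  unfold Cmult, RtoC. cbn [fst snd]. f_equal; ring.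
Qed.

Lemma mscal_scalar s t v1 v2 : 0 < s ->
  exists k, mscal s t (v1, v2) = (k * v1, k * v2) /\ (k * v1) ^ 2 + (k * v2) ^ 2 < s ^ 2.
Proof.
  intro Hs. destruct (Req_dec (Cmod (v1, v2)) 0) as [H0|H0].
  - exists 0. unfold mscal. destruct (Req_EM_T (Cmod (v1, v2)) 0); [|contradiction].
    split; [unfold RtoC; f_equal; ring|]. assert (0 < s ^ 2) by (apply pow_lt; lra). lra.
  - eexists. split; [exact (mscal_pair s t v1 v2 _ H0 eq_refl)|].
    set (th := tanh_ (t * artanh_ (Cmod (v1, v2) / s))). pose proof (tanh_bound (t * artanh_ (Cmod (v1, v2) / s))).
    replace ((s * th / Cmod (v1, v2) * v1) ^ 2 + (s * th / Cmod (v1, v2) * v2) ^ 2) with ((s * th) ^ 2)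
      by (transitivity ((s * th / Cmod (v1, v2)) ^ 2 * (v1 ^ 2 + v2 ^ 2)); [|ring];
          rewrite <- Cmod_pair_sq; field; assumption).
    assert (th ^ 2 < 1) by (fold th in H; nra).
    rewrite Rpow_mult_distr. assert (0 < s ^ 2) by (apply pow_lt; lra). nra.
Qed.

Lemma Cmod_ratio_bounds s v1 v2 : 0 < s -> 0 < v1 ^ 2 + v2 ^ 2 < s ^ 2 ->
  0 < Cmod (v1, v2) /\ 0 < Cmod (v1, v2) / s < 1.
Proof.
  intros Hs Hv. pose proof (Cmod_pair_sq v1 v2). pose proof (Cmod_ge_0 (v1, v2)).
  assert (0 < Cmod (v1, v2) < s) by (split; nra).
  split; [lra|split; [apply Rdiv_lt_0_compat; lra|]].
  apply (Rmult_lt_reg_r s); [lra|]. unfold Rdiv. rewrite Rmult_assoc, Rinv_l; lra.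
Qed.

Lemma mscal_interior s t v1 v2 : 0 < s -> 0 < t < 1 -> 0 < v1 ^ 2 + v2 ^ 2 < s ^ 2 ->
  exists k, 0 < k < 1 /\ mscal s t (v1, v2) = (k * v1, k * v2).
Proof.
  intros Hs Ht Hv. destruct (Cmod_ratio_bounds s v1 v2 Hs Hv) as [Hc Hcs].
  set (c := Cmod (v1, v2)) in *. set (alpha := artanh_ (c / s)).
  assert (Halpha : 0 < alpha) by now apply artanh_pos.
  exists (s * tanh_ (t * alpha) / c). split; [|apply mscal_pair; [fold c; lra|reflexivity]].
  assert (0 < tanh_ (t * alpha) < c / s).
  { rewrite <- tanh_0, <- (tanh_artanh (c / s)) by lra.
    fold alpha. split; apply tanh_increasing; nra. }
  split; [apply Rdiv_lt_0_compat; nra|].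
  apply (Rmult_lt_reg_r c); [lra|]. unfold Rdiv in *. rewrite Rmult_assoc, Rinv_l by lra.
  apply (Rmult_lt_reg_r (/ s)); [apply Rinv_0_lt_compat; lra|].
  replace (s * tanh_ (t * alpha) * 1 * / s) with (tanh_ (t * alpha)) by (field; lra). lra.
Qed.

Lemma mscal_onto s r v1 v2 : 0 < s -> 0 < v1 ^ 2 + v2 ^ 2 < s ^ 2 ->
  (r * v1) ^ 2 + (r * v2) ^ 2 < s ^ 2 -> exists t, mscal s t (v1, v2) = (r * v1, r * v2).
Proof.
  intros Hs Hv Hrv. destruct (Cmod_ratio_bounds s v1 v2 Hs Hv) as [Hc Hcs].
  pose proof (Cmod_pair_sq v1 v2) as Hc2. set (c := Cmod (v1, v2)) in *.
  assert (Hrc : -1 < r * c / s < 1).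
  { assert ((r * c) ^ 2 < s ^ 2) by (rewrite Rpow_mult_distr, Hc2; nra).
    assert (- s < r * c < s) by (split; nra).
    split; apply (Rmult_lt_reg_r s); try lra; unfold Rdiv; rewrite Rmult_assoc, Rinv_l; lra. }
  assert (Halpha : 0 < artanh_ (c / s)) by now apply artanh_pos.
  exists (artanh_ (r * c / s) / artanh_ (c / s)).
  apply mscal_pair; [fold c; lra|]. fold c.
  replace (artanh_ (r * c / s) / artanh_ (c / s) * artanh_ (c / s)) with (artanh_ (r * c / s))
    by (field; lra).
  rewrite tanh_artanh by assumption. field. lra.
Qed.

Lemma madd_offset_pos s a1 a2 b1 b2 v1 v2 : 0 < s ->
  madd s (a1, a2) (v1, v2) = (b1, b2) -> (a1, a2) <> (b1, b2) -> 0 < v1 ^ 2 + v2 ^ 2.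
Proof.
  intros Hs E Hne. destruct (Rlt_or_le 0 (v1 ^ 2 + v2 ^ 2)) as [|Hle]; [assumption|].
  exfalso. apply Hne. assert (v1 = 0) by nra. assert (v2 = 0) by nra. subst.
  rewrite <- E. symmetry. now apply madd_0_r.
Qed.

Lemma parallel_scalar v1 v2 w1 w2 : 0 < v1 ^ 2 + v2 ^ 2 -> v1 * w2 - v2 * w1 = 0 ->
  exists r, w1 = r * v1 /\ w2 = r * v2.
Proof.
  intros Hv Hcr. exists ((v1 * w1 + v2 * w2) / (v1 ^ 2 + v2 ^ 2)). split.
  - replace w1 with ((w1 * (v1 ^ 2 + v2 ^ 2) + v2 * (v1 * w2 - v2 * w1)) / (v1 ^ 2 + v2 ^ 2)) at 1
      by (rewrite Hcr; field; lra).
    field. lra.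
  - replace w2 with ((w2 * (v1 ^ 2 + v2 ^ 2) - v1 * (v1 * w2 - v2 * w1)) / (v1 ^ 2 + v2 ^ 2)) at 1
      by (rewrite Hcr; field; lra).
    field. lra.
Qed.

(** * The lift to Minkowski space *)

Definition lift (s : R) (z : C) : V3 :=
  (s ^ 2 + fst z ^ 2 + snd z ^ 2, 2 * s * fst z, 2 * s * snd z).

Lemma gram_lift s x1 x2 y1 y2 :
  gram (lift s (x1, x2)) (lift s (y1, y2))
  = 4 * s ^ 2 * ((y1 - x1) ^ 2 + (y2 - x2) ^ 2) * madd_den s (- x1) (- x2) y1 y2.
Proof. cbv [gram lorentz lift madd_den fst snd]. ring. Qed.

Lemma det3_lift_madd s a1 a2 v1 v2 w1 w2 : 0 < s ->
  madd_den s a1 a2 v1 v2 <> 0 -> madd_den s a1 a2 w1 w2 <> 0 ->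
  det3 (lift s (a1, a2)) (lift s (madd s (a1, a2) (v1, v2))) (lift s (madd s (a1, a2) (w1, w2)))
  = 4 * (s ^ 2) ^ 3 * (s ^ 2 - a1 ^ 2 - a2 ^ 2) ^ 3 * (v1 * w2 - v2 * w1)
    / (madd_den s a1 a2 v1 v2 * madd_den s a1 a2 w1 w2).
Proof.
  intros Hs Hv Hw. rewrite (madd_coord s a1 a2 v1 v2), (madd_coord s a1 a2 w1 w2) by assumption.
  cbv [det3 lift fst snd]. unfold madd_den in *. field. auto.
Qed.

Lemma det3_lift_madd_eq0 s a1 a2 v1 v2 w1 w2 : 0 < s ->
  a1 ^ 2 + a2 ^ 2 < s ^ 2 -> v1 ^ 2 + v2 ^ 2 < s ^ 2 -> w1 ^ 2 + w2 ^ 2 < s ^ 2 ->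
  det3 (lift s (a1, a2)) (lift s (madd s (a1, a2) (v1, v2))) (lift s (madd s (a1, a2) (w1, w2))) = 0
  <-> v1 * w2 - v2 * w1 = 0.
Proof.
  intros Hs Ha Hv Hw.
  pose proof (madd_den_pos s a1 a2 v1 v2 Hs Ha Hv). pose proof (madd_den_pos s a1 a2 w1 w2 Hs Ha Hw).
  rewrite det3_lift_madd by lra.
  assert (0 < 4 * (s ^ 2) ^ 3 * (s ^ 2 - a1 ^ 2 - a2 ^ 2) ^ 3).
  { repeat apply Rmult_lt_0_compat; try lra; repeat apply pow_lt; lra. }
  unfold Rdiv. split; intro Hdet.
  - apply Rmult_integral in Hdet as [Hdet|Hdet].
    + apply Rmult_integral in Hdet as [Hdet|Hdet]; lra.
    + exfalso. revert Hdet. apply Rinv_neq_0_compat. nra.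
  - rewrite Hdet. ring.
Qed.

Lemma on_gyroline_det s A B X : 0 < s -> in_disc s A -> in_disc s B ->
  on_gyroline s A B X -> det3 (lift s A) (lift s B) (lift s X) = 0.
Proof.
  intros Hs HA HB [t ->]. destruct A as [a1 a2], B as [b1 b2].
  rewrite in_disc_pair in HA, HB by assumption. change (Copp (a1, a2)) with (- a1, - a2).
  pose proof (madd_in_disc s (- a1) (- a2) b1 b2 Hs ltac:(lra) HB) as Hv.
  rewrite <- (madd_cancel_l s a1 a2 b1 b2 Hs HA HB) at 1.
  destruct (madd s (- a1, - a2) (b1, b2)) as [v1 v2]. cbn [fst snd] in Hv.
  destruct (mscal_scalar s t v1 v2 Hs) as (k & -> & Hk).
  apply det3_lift_madd_eq0; auto. ring.
Qed.

Lemma det_on_gyroline s A B X : 0 < s -> in_disc s A -> in_disc s B -> in_disc s X -> A <> B ->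
  det3 (lift s A) (lift s B) (lift s X) = 0 -> on_gyroline s A B X.
Proof.
  intros Hs HA HB HX HAB Hdet. destruct A as [a1 a2], B as [b1 b2], X as [x1 x2].
  rewrite in_disc_pair in HA, HB, HX by assumption.
  unfold on_gyroline. change (Copp (a1, a2)) with (- a1, - a2).
  pose proof (madd_cancel_l s a1 a2 b1 b2 Hs HA HB) as EB.
  pose proof (madd_cancel_l s a1 a2 x1 x2 Hs HA HX) as EX.
  pose proof (madd_in_disc s (- a1) (- a2) b1 b2 Hs ltac:(lra) HB) as Hv.
  pose proof (madd_in_disc s (- a1) (- a2) x1 x2 Hs ltac:(lra) HX) as Hw.
  destruct (madd s (- a1, - a2) (b1, b2)) as [v1 v2], (madd s (- a1, - a2) (x1, x2)) as [w1 w2].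
  cbn [fst snd] in Hv, Hw.
  rewrite <- EB, <- EX in Hdet. apply det3_lift_madd_eq0 in Hdet; auto.
  pose proof (madd_offset_pos s a1 a2 b1 b2 v1 v2 Hs EB HAB) as Hv0.
  destruct (parallel_scalar v1 v2 w1 w2 Hv0 Hdet) as (r & -> & ->).
  destruct (mscal_onto s r v1 v2 Hs (conj Hv0 Hv) Hw) as [t Ht].
  exists t. rewrite Ht. now symmetry.
Qed.

Lemma in_gyroside_props s B C D : 0 < s -> in_disc s B -> in_disc s C -> B <> C ->
  in_gyroside s B C D -> on_gyroline s B C D /\ in_disc s D /\ D <> B /\ D <> C.
Proof.
  intros Hs HB HC HBC [t [Ht HD]]. split; [exists t; exact HD|].
  destruct B as [b1 b2], C as [c1 c2]. rewrite in_disc_pair in HB, HC by assumption.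
  change (Copp (b1, b2)) with (- b1, - b2) in HD.
  pose proof (madd_cancel_l s b1 b2 c1 c2 Hs HB HC) as EC.
  pose proof (madd_in_disc s (- b1) (- b2) c1 c2 Hs ltac:(lra) HC) as Hv.
  destruct (madd s (- b1, - b2) (c1, c2)) as [v1 v2]. cbn [fst snd] in Hv.
  pose proof (madd_offset_pos s b1 b2 c1 c2 v1 v2 Hs EC HBC) as Hv0.
  destruct (mscal_interior s t v1 v2 Hs Ht (conj Hv0 Hv)) as (k & Hk & Hkv).
  rewrite Hkv in HD. subst D.
  assert (Hkd : (k * v1) ^ 2 + (k * v2) ^ 2 < s ^ 2).
  { replace ((k * v1) ^ 2 + (k * v2) ^ 2) with (k ^ 2 * (v1 ^ 2 + v2 ^ 2)) by ring.
    assert (k ^ 2 < 1) by nra. nra. }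
  assert (Hs2 : 0 < s ^ 2) by (apply pow_lt; lra).
  split; [apply in_disc_pair, madd_in_disc; auto|].
  split; intro E; apply (f_equal (madd s (- b1, - b2))) in E.
  - rewrite madd_cancel_opp_l in E by auto.
    rewrite <- (madd_0_r s b1 b2), madd_cancel_opp_l in E by (auto; lra). injection E as E1 E2.
    assert (Hk0 : k * (v1 ^ 2 + v2 ^ 2) = 0) by (rewrite Rmult_plus_distr_l; nra). nra.
  - rewrite <- EC, !madd_cancel_opp_l in E by auto. injection E as E1 E2.
    assert (Hk1 : (1 - k) * (v1 ^ 2 + v2 ^ 2) = 0) by nra. nra.
Qed.

Lemma gram_lift_nonneg s X Y : 0 <= gram (lift s X) (lift s Y).
Proof.
  destruct X as [x1 x2], Y as [y1 y2]. rewrite gram_lift. unfold madd_den.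
  apply Rmult_le_pos; [apply Rmult_le_pos|]; [pose proof (pow2_ge_0 s); lra| |];
    apply Rplus_le_le_0_compat; apply pow2_ge_0.
Qed.

Lemma gram_lift_pos s X Y : 0 < s -> in_disc s X -> in_disc s Y -> X <> Y ->
  0 < gram (lift s X) (lift s Y).
Proof.
  intros Hs HX HY HXY. destruct X as [x1 x2], Y as [y1 y2].
  rewrite in_disc_pair in HX, HY by assumption. rewrite gram_lift.
  pose proof (madd_den_pos s (- x1) (- x2) y1 y2 Hs ltac:(lra) HY).
  assert (0 < (y1 - x1) ^ 2 + (y2 - x2) ^ 2).
  { pose proof (pow2_ge_0 (y1 - x1)). pose proof (pow2_ge_0 (y2 - x2)).
    destruct (Req_dec x1 y1) as [<-|Hne].
    - assert (y2 - x2 <> 0) by (intro; apply HXY; f_equal; lra).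
      pose proof (pow_nonzero (y2 - x2) 2 ltac:(assumption)). lra.
    - pose proof (pow_nonzero (y1 - x1) 2 ltac:(lra)). lra. }
  assert (0 < s ^ 2) by (apply pow_lt; lra).
  repeat apply Rmult_lt_0_compat; lra.
Qed.

(* [s^2 - |X|^2] is the Minkowski norm of [lift s X], so this says that [v_gamma] is [s/2] times
   the hyperbolic sine of the distance of the lifted points on the hyperboloid. *)
Lemma gam_gdist s X Y : 0 < s -> in_disc s X -> in_disc s Y ->
  gam s (gdist s X Y)
  = s * sqrt (gram (lift s X) (lift s Y)) / (2 * (s ^ 2 - Cmod X ^ 2) * (s ^ 2 - Cmod Y ^ 2)).
Proof.
  intros Hs HX HY. pose proof (gram_lift_nonneg s X Y) as HG.
  destruct X as [x1 x2], Y as [y1 y2].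
  rewrite in_disc_pair in HX, HY by assumption. rewrite !Cmod_pair_sq. rewrite gram_lift in *.
  unfold gam, gdist. change (Copp (x1, x2)) with (- x1, - x2).
  pose proof (madd_den_pos s (- x1) (- x2) y1 y2 Hs ltac:(lra) HY) as Hd.
  pose proof (madd_norm2 s (- x1) (- x2) y1 y2 Hs ltac:(lra)) as Hn.
  destruct (madd s (- x1, - x2) (y1, y2)) as [z1 z2]. cbn [fst snd] in Hn.
  pose proof (Cmod_ge_0 (z1, z2)) as Hz. rewrite <- Cmod_pair_sq in Hn.
  set (den := madd_den s (- x1) (- x2) y1 y2) in *. set (z := Cmod (z1, z2)) in *.
  set (hx := s ^ 2 - (x1 ^ 2 + x2 ^ 2)). set (hy := s ^ 2 - (y1 ^ 2 + y2 ^ 2)).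
  assert (0 < s ^ 2) by (apply pow_lt; lra). assert (0 < hx) by (unfold hx; lra).
  assert (0 < hy) by (unfold hy; lra).
  assert (Hgap : 1 - z ^ 2 / s ^ 2 = hx * hy / den).
  { assert (Eden : den = s ^ 2 * ((- x1 + y1) ^ 2 + (- x2 + y2) ^ 2) + hx * hy)
      by (unfold den, hx, hy, madd_den; ring).
    rewrite Hn, Eden. field. repeat split; (rewrite <- Eden || idtac); lra. }
  rewrite Hgap. apply Rsqr_inj.
  - apply Rdiv_le_0_compat; [assumption|]. apply Rdiv_lt_0_compat; nra.
  - apply Rdiv_le_0_compat; [apply Rmult_le_pos; [lra|apply sqrt_pos]|nra].
  - unfold Rsqr. transitivity (z ^ 2 * (den / (hx * hy)) ^ 2); [field; lra|].
    transitivity (s ^ 2 * (sqrt (4 * s ^ 2 * ((y1 - x1) ^ 2 + (y2 - x2) ^ 2) * den)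
                           * sqrt (4 * s ^ 2 * ((y1 - x1) ^ 2 + (y2 - x2) ^ 2) * den))
                  / (2 * hx * hy) ^ 2); [|field; lra].
    rewrite sqrt_sqrt by assumption. rewrite Hn. field. lra.
Qed.

Lemma disc_gap_pos s X : in_disc s X -> 0 < s ^ 2 - Cmod X ^ 2.
Proof. unfold in_disc. intro HX. pose proof (Cmod_ge_0 X). nra. Qed.

Lemma gam_menelaus_of_gram s A B C D M N P : 0 < s ->
  in_disc s A -> in_disc s B -> in_disc s C -> in_disc s D ->
  in_disc s M -> in_disc s N -> in_disc s P ->
  C <> D -> N <> A -> M <> P -> B <> A ->
  gram (lift s B) (lift s D) * gram (lift s C) (lift s A)
  * gram (lift s N) (lift s P) * gram (lift s M) (lift s A)
  = gram (lift s C) (lift s D) * gram (lift s N) (lift s A)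
    * gram (lift s M) (lift s P) * gram (lift s B) (lift s A) ->
  gam s (gdist s B D) / gam s (gdist s C D)
  * (gam s (gdist s C A) / gam s (gdist s N A))
  * (gam s (gdist s N P) / gam s (gdist s M P))
  * (gam s (gdist s M A) / gam s (gdist s B A)) = 1.
Proof.
  intros Hs HA HB HC HD HM HN HP HCD HNA HMP HBA Hgram.
  rewrite !gam_gdist by assumption.
  pose proof (disc_gap_pos s A HA). pose proof (disc_gap_pos s B HB).
  pose proof (disc_gap_pos s C HC). pose proof (disc_gap_pos s D HD).
  pose proof (disc_gap_pos s M HM). pose proof (disc_gap_pos s N HN).
  pose proof (disc_gap_pos s P HP).
  pose proof (gram_lift_pos s C D Hs HC HD HCD). pose proof (gram_lift_pos s N A Hs HN HA HNA).
  pose proof (gram_lift_pos s M P Hs HM HP HMP). pose proof (gram_lift_pos s B A Hs HB HA HBA).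
  pose proof (gram_lift_nonneg s B D). pose proof (gram_lift_nonneg s C A).
  pose proof (gram_lift_nonneg s N P). pose proof (gram_lift_nonneg s M A).
  set (gBD := gram (lift s B) (lift s D)) in *. set (gCA := gram (lift s C) (lift s A)) in *.
  set (gNP := gram (lift s N) (lift s P)) in *. set (gMA := gram (lift s M) (lift s A)) in *.
  set (gCD := gram (lift s C) (lift s D)) in *. set (gNA := gram (lift s N) (lift s A)) in *.
  set (gMP := gram (lift s M) (lift s P)) in *. set (gBA := gram (lift s B) (lift s A)) in *.
  pose proof (sqrt_lt_R0 gCD ltac:(assumption)). pose proof (sqrt_lt_R0 gNA ltac:(assumption)).
  pose proof (sqrt_lt_R0 gMP ltac:(assumption)). pose proof (sqrt_lt_R0 gBA ltac:(assumption)).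
  transitivity (sqrt gBD * sqrt gCA * sqrt gNP * sqrt gMA
                / (sqrt gCD * sqrt gNA * sqrt gMP * sqrt gBA)); [field; repeat split; lra|].
  rewrite <- !sqrt_mult by (repeat apply Rmult_le_pos; lra).
  rewrite Hgram. apply Rdiv_diag. apply Rgt_not_eq, sqrt_lt_R0.
  repeat apply Rmult_lt_0_compat; assumption.
Qed.

Theorem theorem5 (s : R) (A B C D E F M N P : C) :
  0 < s ->
  in_disc s A -> in_disc s B -> in_disc s C ->
  A <> B -> B <> C -> C <> A ->
  ~ on_gyroline s A B C ->
  in_gyroside s B C D ->
  in_disc s E -> in_disc s F -> E <> F ->
  ~ on_gyroline s E F A -> ~ on_gyroline s E F B -> ~ on_gyroline s E F C ->
  in_disc s M -> on_gyroline s E F M -> on_gyroline s A B M ->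
  in_disc s N -> on_gyroline s E F N -> on_gyroline s A C N ->
  in_disc s P -> on_gyroline s E F P -> on_gyroline s A D P ->
  gam s (gdist s B D) / gam s (gdist s C D)
  * (gam s (gdist s C A) / gam s (gdist s N A))
  * (gam s (gdist s N P) / gam s (gdist s M P))
  * (gam s (gdist s M A) / gam s (gdist s B A)) = 1.
Proof.
  intros Hs HA HB HC HAB HBC HCA HnABC HDside HE HF HEF HnA HnB HnC
    HM HMl HMab HN HNl HNac HP HPl HPad.
  destruct (in_gyroside_props s B C D Hs HB HC HBC HDside) as (HDbc & HD & HDB & HDC).
  assert (HMA : M <> A) by (intros ->; contradiction).
  assert (HNA : N <> A) by (intros ->; contradiction).
  assert (Habc : det3 (lift s A) (lift s B) (lift s C) <> 0)
    by (intro Hdet; apply HnABC, det_on_gyroline; assumption).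
  pose proof (on_gyroline_det s B C D Hs HB HC HDbc) as Hd.
  pose proof (on_gyroline_det s A B M Hs HA HB HMab) as Hm.
  pose proof (on_gyroline_det s A C N Hs HA HC HNac) as Hn.
  pose proof (on_gyroline_det s A D P Hs HA HD HPad) as Hp.
  assert (Hmnp : det3 (lift s M) (lift s N) (lift s P) = 0).
  { apply (det3_coplanar (lift s E) (lift s F)); try now apply on_gyroline_det.
    apply Rgt_not_eq, gram_lift_pos; assumption. }
  assert (HMP : M <> P).
  { intros <-. pose proof (gram_collapse _ _ _ _ _ Habc Hd Hm Hp).
    pose proof (gram_lift_pos s B D Hs HB HD (not_eq_sym HDB)).
    pose proof (gram_lift_pos s M A Hs HM HA HMA). nra. }
  apply gam_menelaus_of_gram; auto.
  apply gram_menelaus; assumption.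
Qed.
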